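(* For every integer $n\ge4$: $\gamma_{(2,1,1)}(P_n)=\frac{2n}{3}+1$ if $n\equiv0\pmod3$ and $\gamma_{(2,1,1)}(P_n)=2\lceil n/3\rceil$ otherwise; and $\gamma_{(2,1,1)}(C_n)=\lceil 2n/3\rceil$.
   Context: $P_n$ and $C_n$ denote the path and the cycle on $n$ vertices. For a graph $G$, a function $f:V(G)\to\{0,1,2\}$ is a $(2,1,1)$-dominating function if $\sum_{u\in N(v)}f(u)\ge2$ for every vertex $v$ with $f(v)=0$, and $\sum_{u\in N(v)}f(u)\ge1$ for every vertex $v$ with $f(v)\in\{1,2\}$, where $N(v)$ is the open neighbourhood. $\gamma_{(2,1,1)}(G)$ is the minimum of $\sum_{v}f(v)$ over all $(2,1,1)$-dominating functions $f$. *)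

From mathcomp Require Import all_boot all_order.
Set Implicit Arguments. Unset Strict Implicit. Unset Printing Implicit Defensive.

Definition weight (T : finType) (f : {ffun T -> 'I_3}) : nat := \sum_(v : T) (f v : nat).

Definition nbsum (T : finType) (adj : rel T) (f : {ffun T -> 'I_3}) (v : T) : nat :=
  \sum_(u : T | adj v u) (f u : nat).

Definition dom211 (T : finType) (adj : rel T) (f : {ffun T -> 'I_3}) : bool :=
  [forall v : T, if (f v : nat) == 0 then 2 <= nbsum adj f v else 1 <= nbsum adj f v].

(* The default 2*|T| is >= the weight of every function, so it never undercuts
   the minimum when some dominating function exists (e.g. the constant 2 function
   whenever every vertex has a neighbour). *)
Definition gamma211 (T : finType) (adj : rel T) : nat :=
  \big[minn/(2 * #|T|)]_(f : {ffun T -> 'I_3} | dom211 adj f) weight f.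

Definition path_adj (n : nat) : rel 'I_n :=
  fun i j => (i.+1 == j :> nat) || (j.+1 == i :> nat).

Definition cycle_adj (n : nat) : rel 'I_n :=
  fun i j => path_adj i j ||
             ((i == 0 :> nat) && (j == n.-1 :> nat)) ||
             ((j == 0 :> nat) && (i == n.-1 :> nat)).

(** Along a path or a cycle, a (2,1,1)-dominating function puts weight at
    least 2 on every three consecutive vertices: the two neighbours of a
    vertex of weight 0 carry 2, those of any other vertex carry 1.  On C_n,
    summing this over all n windows counts each vertex three times, so
    3 w(f) >= 2n.  On P_n, pad both ends with a phantom vertex of weight 0;
    the n + 2 positions contain (n + 2) / 3 disjoint windows, which gives
    2 ceil(n/3).  When 3 | n the extra unit comes from the first vertex v1:
    either f(v1) >= 1 and the windows are started after it, or f(v1) = 0,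
    which forces f(v2) >= 2 and f(v3) >= 1.  The pattern 1,1,0,1,1,0,...
    (ending with 1,1 on the path) attains the bounds. *)

From mathcomp Require Import all_boot all_order zify.
Set Implicit Arguments. Unset Strict Implicit. Unset Printing Implicit Defensive.

Import Order.TTheory.

Lemma weight_le_2card (T : finType) (f : {ffun T -> 'I_3}) : weight f <= 2 * #|T|.
Proof.
rewrite /weight mulnC -sum_nat_const; apply: leq_sum => v _; rewrite -ltnS; exact: ltn_ord.
Qed.

Lemma gamma211_eq (T : finType) (adj : rel T) (f : {ffun T -> 'I_3}) B :
  dom211 adj f -> weight f <= B -> (forall g, dom211 adj g -> B <= weight g) ->
  gamma211 adj = B.
Proof.
move=> dom_f le_fB ge_B; apply/eqP; rewrite eqn_leq; apply/andP; split.
  exact: leq_trans (@bigmin_le_cond _ nat _ _ _ _ (@weight T) dom_f) le_fB.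
apply: (@le_bigmin _ nat) => //; exact: leq_trans (ge_B f dom_f) (weight_le_2card f).
Qed.

Definition indicator n (P : pred nat) : {ffun 'I_n -> 'I_3} := [ffun i : 'I_n => inord (P i)].

Lemma indicatorE n P (i : 'I_n) : (indicator n P i : nat) = P i.
Proof. by rewrite ffunE inordK //; case: (P i). Qed.

Lemma weight_indicator n P : weight (indicator n P) = count P (iota 0 n).
Proof.
rewrite /weight (eq_bigr _ (fun i _ => indicatorE P i)).
rewrite -(big_mkord xpredT (fun i => (P i : nat))) -sum1_count [RHS]big_mkcond.
by rewrite /index_iota subn0.
Qed.

Lemma count_mod3_neq2 m : count (fun i => i %% 3 != 2) (iota 0 m) = m - m %/ 3.
Proof. by elim: m => // m IH; rewrite -[m.+1]addn1 iotaD count_cat IH /=; lia. Qed.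

Section PathLowerBound.

Variables (n : nat) (x : nat -> nat).
Hypothesis x_dom : forall v, v < n ->
  if x v.+1 == 0 then 2 <= x v + x v.+2 else 1 <= x v + x v.+2.

Lemma nbr_sum_ge1 v : v < n -> 1 <= x v + x v.+2.
Proof. by move/x_dom; case: ifP; lia. Qed.

Lemma nbr_sum_ge2 v : v < n -> x v.+1 = 0 -> 2 <= x v + x v.+2.
Proof. by move/x_dom => + xv0; rewrite xv0. Qed.

Lemma window_ge2 v : v < n -> 2 <= x v + x v.+1 + x v.+2.
Proof.
move=> hv; have := nbr_sum_ge1 hv; have := @nbr_sum_ge2 v hv.
by case: (posnP (x v.+1)) => [-> /(_ erefl) | xv_gt0 _]; lia.
Qed.

Lemma sum_windows_ge a m b : a + 3 * m <= b <= n.+2 -> 2 * m <= \sum_(a <= i < b) x i.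
Proof.
elim: m a => [|m IH] a /andP [hab hb] //.
have w : 2 <= x a + x a.+1 + x a.+2 by apply: window_ge2; lia.
have ih : 2 * m <= \sum_(a.+3 <= i < b) x i by apply: IH; lia.
by do 3 (rewrite big_ltn; last lia); lia.
Qed.

Lemma path_sum_ge : 0 < n ->
  (if n %% 3 == 0 then (2 * n) %/ 3 + 1 else 2 * ((n + 2) %/ 3))
    <= \sum_(0 <= i < n.+2) x i.
Proof.
move=> n_gt0; case: ifP => [/eqP n3 | _]; last by apply: sum_windows_ge; lia.
have n_gt1 : 1 < n by lia.
case: (posnP (x 1)) => [x1_0 | x1_gt0].
- do 4 (rewrite big_ltn; last lia).
  have := nbr_sum_ge2 n_gt0 x1_0; have := nbr_sum_ge1 n_gt1.
  have := @sum_windows_ge 4 (n %/ 3).-1 n.+2; lia.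
- do 2 (rewrite big_ltn; last lia).
  have := @sum_windows_ge 2 (n %/ 3) n.+2; lia.
Qed.

End PathLowerBound.

(* Position i of the path holds vertex i - 1, so that positions 0 and n + 1
   are phantom vertices of weight 0 and the neighbours of the vertex at
   position v + 1 sit at positions v and v + 2. *)
Definition path_val n (f : {ffun 'I_n -> 'I_3}) (i : nat) : nat :=
  \sum_(u : 'I_n | u.+1 == i) f u.

Lemma path_val_ord n f (u : 'I_n) : path_val f u.+1 = f u.
Proof. by rewrite /path_val (big_pred1 u) // => w; rewrite eqSS. Qed.

Lemma path_val_out n f i : ~~ (0 < i <= n) -> @path_val n f i = 0.
Proof.
by move=> hi; rewrite /path_val big_pred0 // => u; apply/eqP => ui; have := ltn_ord u; lia.
Qed.

Lemma weight_path_val n f : weight f = \sum_(0 <= i < n.+2) @path_val n f i.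
Proof.
rewrite big_nat_recr // big_nat_recl // big_mkord !path_val_out ?ltnn //= add0n addn0.
by apply: eq_bigr => u _; rewrite path_val_ord.
Qed.

Lemma nbsum_path n f (v : 'I_n) :
  nbsum (@path_adj n) f v = path_val f v + path_val f v.+2.
Proof.
rewrite /nbsum (bigID (fun u : 'I_n => u.+1 == v)) /=.
by congr (_ + _); apply: eq_bigl => u; rewrite /path_adj; lia.
Qed.

Lemma path_val_indicator n P i :
  path_val (indicator n P) i = (0 < i <= n) && P i.-1.
Proof.
have [|hi] := boolP (0 < i <= n); last by rewrite path_val_out.
by case: i => // j hj; rewrite (path_val_ord _ (Ordinal hj)) indicatorE.
Qed.

Lemma path_lower_bound n f : 0 < n -> dom211 (@path_adj n) f ->
  (if n %% 3 == 0 then (2 * n) %/ 3 + 1 else 2 * ((n + 2) %/ 3)) <= weight f.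
Proof.
move=> n_gt0 /forallP dom_f; rewrite weight_path_val; apply: path_sum_ge => // v hv.
by have := dom_f (Ordinal hv); rewrite nbsum_path -(path_val_ord f (Ordinal hv)).
Qed.

Definition path_witness n := indicator n (fun i => (i %% 3 != 2) || (n - 2 <= i)).

Lemma path_witness_dom n : 2 <= n -> dom211 (@path_adj n) (path_witness n).
Proof.
move=> hn; apply/forallP => v; rewrite nbsum_path indicatorE !path_val_indicator.
by have := ltn_ord v; case: ifP; lia.
Qed.

Lemma weight_path_witness n : 2 <= n ->
  weight (path_witness n) = (if n %% 3 == 0 then (2 * n) %/ 3 + 1 else 2 * ((n + 2) %/ 3)).
Proof.
move=> hn; rewrite weight_indicator.
have -> : iota 0 n = iota 0 (n - 2) ++ iota (n - 2) 2 by rewrite -iotaD subnK.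
rewrite count_cat (@eq_in_count _ _ (fun i => i %% 3 != 2)); last first.
  by move=> i; rewrite mem_iota; lia.
by rewrite count_mod3_neq2 /=; case: ifP; lia.
Qed.

Lemma val_ordS n (v : 'I_n) : (ordS v : nat) = if v.+1 == n then 0 else v.+1.
Proof.
rewrite /=; case: eqP => [-> | hv]; first by rewrite modnn.
by rewrite modn_small //; have := ltn_ord v; lia.
Qed.

Lemma val_ord_pred n (v : 'I_n) : (ord_pred v : nat) = if v == 0 :> nat then n.-1 else v.-1.
Proof.
have := ltn_ord v; rewrite /=; case: eqP => [-> | hv] hvn; first by rewrite modn_small; lia.
have -> : (v + n).-1 = v.-1 + n by lia.
by rewrite modnDr modn_small; lia.
Qed.

Lemma cycle_adjE n (v u : 'I_n) : 3 <= n ->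
  cycle_adj v u = (u == ord_pred v) || (u == ordS v).
Proof.
move=> hn; rewrite /cycle_adj /path_adj -!(inj_eq (@ord_inj n)) val_ord_pred val_ordS.
by have := ltn_ord u; have := ltn_ord v; case: ifP; case: ifP; lia.
Qed.

Lemma nbsum_cycle n f (v : 'I_n) : 3 <= n ->
  nbsum (@cycle_adj n) f v = f (ord_pred v) + f (ordS v).
Proof.
move=> hn; rewrite /nbsum (eq_bigl (fun u => (u == ord_pred v) || (u == ordS v))); last first.
  by move=> u; exact: cycle_adjE.
rewrite (bigD1 (ord_pred v)) ?eqxx //=.
congr (_ + _); apply: big_pred1 => u /=.
have pred_neq_succ : ord_pred v != ordS v.
  rewrite -(inj_eq (@ord_inj n)) val_ord_pred val_ordS.
  by have := ltn_ord v; case: ifP; case: ifP; lia.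
by case: eqP => [-> | _]; rewrite ?andbF ?(negbTE pred_neq_succ) //= andbT.
Qed.

Lemma cycle_lower_bound n f : 3 <= n -> dom211 (@cycle_adj n) f -> (2 * n + 2) %/ 3 <= weight f.
Proof.
move=> hn /forallP dom_f.
have shift_invariant (s : 'I_n -> 'I_n) : injective s -> \sum_v (f (s v) : nat) = weight f.
  by move=> s_inj; rewrite /weight [RHS](reindex_inj s_inj).
have : \sum_(v : 'I_n) 2 <= \sum_v ((f (ord_pred v) : nat) + f v + f (ordS v)).
  apply: leq_sum => v _; have := dom_f v; rewrite nbsum_cycle //.
  by case: ifP; lia.
rewrite !big_split /= (shift_invariant _ (@ord_pred_inj n)) (shift_invariant _ (@ordS_inj n)).
by rewrite sum_nat_const card_ord -/(weight f); lia.
Qed.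

Definition cycle_witness n := indicator n (fun i => i %% 3 != 2).

Lemma cycle_witness_dom n : 3 <= n -> dom211 (@cycle_adj n) (cycle_witness n).
Proof.
move=> hn; apply/forallP => v; rewrite nbsum_cycle // !indicatorE val_ord_pred val_ordS.
by have := ltn_ord v; case: ifP; case: ifP; case: ifP; lia.
Qed.

Lemma weight_cycle_witness n : weight (cycle_witness n) = (2 * n + 2) %/ 3.
Proof. by rewrite weight_indicator count_mod3_neq2; lia. Qed.

Theorem proposition12 (n : nat) (hn : 4 <= n) :
  gamma211 (@path_adj n) =
    (if n %% 3 == 0 then (2 * n) %/ 3 + 1 else 2 * ((n + 2) %/ 3))
  /\ gamma211 (@cycle_adj n) = (2 * n + 2) %/ 3.
Proof.
have n_ge3 : 3 <= n by lia.
split.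
- apply: (gamma211_eq (path_witness_dom (ltnW n_ge3))).
    by rewrite weight_path_witness //; lia.
  by move=> g; apply: path_lower_bound; lia.
- apply: (gamma211_eq (cycle_witness_dom n_ge3)); first by rewrite weight_cycle_witness.
  by move=> g; apply: cycle_lower_bound.
Qed.
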